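(* Let $\mathcal R_1$ be a collection of $\theta_1$ independent random RDR sets, let $S^*$ be the size-$k$ set returned by the greedy algorithm for weighted maximum coverage on $\mathcal R_1$, and let $\Lambda_1(S^* )=\frac{\hat{INF}_F}{n}\mathcal W_{\mathcal R_1}(S^* )$. Let $S^o$ be a size-$k$ set maximizing $\sigma$. For any $\delta\in(0,1)$, with $a=\ln(1/\delta)$, $$\Pr\Big[\sigma(S^o)\ \le\ \Big(\sqrt{\tfrac{\Lambda_1(S^* )}{1-1/e}+a}+\sqrt a\Big)^2\frac{n}{\theta_1(1-\epsilon')}\Big]\ \ge\ 1-\delta .$$
   Context: Setting: $G=(V,E)$ is a directed graph with $n=|V|$ nodes. A misinformation campaign $F$ spreads in $G$ under the paper's competitive propagation model (TCIC); $INF_F$ is the expected number of nodes reached by $F$. $\sigma(\cdot)$ denotes either of the two submodular set functions (lower bound $\underline\mu$ or upper bound $\overline\mu$ of the expected misinformation-mitigation function). $\hat{INF}_F$ is an $(\epsilon',\delta')$-approximation of $INF_F$, and $\Gamma=\hat{INF}_F/INF_F$; throughout, $\hat{INF}_F$ is treated as fixed with $1-\epsilon'\le\Gamma\le1+\epsilon'$, and $\hat{INF}_F\le n$. Each random RDR set (generated by importance sampling) carries a weight; $\mathcal W_{\mathcal R}(S)$ is the total weight of RDR sets in $\mathcal R$ covered by $S$, and $\frac{\hat{INF}_F}{n}\mathcal W_{\mathcal R}(S)=\sum_i\hat Z_i(S)$ where $\hat Z_i(S)$ is the estimator of the $i$-th set, with $\mathbb E[\hat Z_i(S)]=\Gamma\sigma(S)/n$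 and, for $p=\mathbb E[\hat Z_i(S)]$, $\lambda>0$: $\Pr[\sum_{i\le\theta}\hat Z_i(S)-\theta p\le-\lambda]\le\exp(-\lambda^2/(4\theta p\hat{INF}_F/n))$. The greedy algorithm picks $k$ nodes greedily maximizing total covered weight, and guarantees $\Lambda_1(S^* )\ge(1-1/e)\Lambda_1(S^o)$. *)

From HB Require Import structures.
From mathcomp Require Import all_boot all_order all_algebra.
From mathcomp Require Import reals sequences exp.
Set Implicit Arguments. Unset Strict Implicit. Unset Printing Implicit Defensive.
Import Order.TTheory GRing.Theory Num.Theory.
Local Open Scope ring_scope.

Definition is_prob {R : realType} {Om : finType} (P : Om -> R) :=
  (forall w, 0 <= P w) /\ \sum_(w : Om) P w = 1.

Definition Pr {R : realType} {Om : finType} (P : Om -> R) (E : pred Om) : R :=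
  \sum_(w : Om | E w) P w.

Definition Expect {R : realType} {Om : finType} (P : Om -> R) (X : Om -> R) : R :=
  \sum_(w : Om) P w * X w.

(* An RDR set: a set of nodes together with its (importance-sampling) weight. *)
Definition rdr (R : realType) (V : finType) := ({set V} * R)%type.

Definition mutually_independent {R : realType} {Om : finType} {V : finType}
    (P : Om -> R) (th : nat) (X : 'I_th -> Om -> rdr R V) :=
  forall A : 'I_th -> pred (rdr R V),
    Pr P (fun w => [forall i, A i (X i w)]) = \prod_(i < th) Pr P (fun w => A i (X i w)).

Definition covW {R : realType} {V : finType} {th : nat}
    (C : 'I_th -> rdr R V) (S : {set V}) : R :=
  \sum_(i < th) (if S :&: (C i).1 != set0 then (C i).2 else 0).

Fixpoint greedy {R : realType} {V : finType} (f : {set V} -> R) (k : nat) : {set V} :=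
  match k with
  | 0 => set0
  | k'.+1 =>
      let S := greedy f k' in
      match [pick v | v \notin S] with
      | None => S
      | Some v0 => Order.arg_max v0 (fun v => v \notin S) (fun v => f (v |: S)) |: S
      end
  end.

From HB Require Import structures.
From mathcomp Require Import all_boot all_order all_algebra.
From mathcomp Require Import reals sequences exp.
From mathcomp Require Import lra.
Import Order.TTheory GRing.Theory Num.Theory.
Local Open Scope ring_scope.

(* Since the estimators of So sum to Lambda1(So), the lower-tail bound at
   lam = sqrt (a D), where p = Gamma sigma(So) / n and D = 4 th1 p INF_hat / n,
   shows that Lambda1(So) <= th1 p - lam has probability at most
   exp(-a) = delta.  Otherwise D <= 4 th1 p and the greedy guarantee give
     th1 p - 2 sqrt a sqrt (th1 p) < Lambda1(Sstar) / (1 - 1/e) =: L,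
   a quadratic inequality in sqrt (th1 p) whose solution is
   th1 p <= (sqrt (L + a) + sqrt a)^2; finally Gamma >= 1 - eps' turns this
   into the bound on sigma(So).  Independence, unbiasedness and the optimality
   of So are only needed to justify the lower-tail hypothesis, which is used
   directly. *)

Lemma Pr_ge_compl {R : realType} {Om : finType} {P : Om -> R} (E F : pred Om) :
  is_prob P -> (forall w, ~~ E w -> F w) -> 1 - Pr P E <= Pr P F.
Proof.
move=> [P_ge0 P_sum1] notE_F; rewrite /Pr -P_sum1 (bigID E) /= addrAC subrr add0r.
rewrite (big_mkcond (fun w => ~~ E w)) [leRHS](big_mkcond F).
apply: ler_sum => w _; case: ifP => [/notE_F -> //|_].
by case: ifP.
Qed.

Lemma Pr_all {R : realType} {Om : finType} {P : Om -> R} (F : pred Om) :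
  is_prob P -> (forall w, F w) -> Pr P F = 1.
Proof.
by move=> [_ P_sum1] allF; rewrite /Pr -P_sum1; apply: eq_bigl => w; rewrite allF.
Qed.

Lemma expRN_ln_div1 {R : realType} (delta : R) :
  0 < delta -> expR (- ln (1 / delta)) = delta.
Proof.
move=> delta_gt0.
by rewrite expRN lnK ?div1r ?invrK // posrE invr_gt0.
Qed.

Lemma Pr_tail_sqrt_ln_le {R : realType} {Om : finType} {P : Om -> R}
    (E : R -> pred Om) (D delta : R) :
  0 < D -> 0 < delta -> delta < 1 ->
  (forall lam, 0 < lam -> Pr P (E lam) <= expR (- (lam ^+ 2) / D)) ->
  Pr P (E (Num.sqrt (ln (1 / delta) * D))) <= delta.
Proof.
move=> D_gt0 delta_gt0 delta_lt1 tail.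
have a_gt0 : 0 < ln (1 / delta) by rewrite ln_gt0 // div1r invf_gt1.
have lam_gt0 : 0 < Num.sqrt (ln (1 / delta) * D) by rewrite sqrtr_gt0 mulr_gt0.
rewrite (le_trans (tail _ lam_gt0)) //.
rewrite sqr_sqrtr ?(mulr_ge0 (ltW a_gt0) (ltW D_gt0)) //.
by rewrite mulNr mulfK ?gt_eqF // expRN_ln_div1.
Qed.

Lemma one_sub_invexpR1_gt0 {R : realType} : 0 < 1 - (expR (1 : R))^-1.
Proof. by rewrite subr_gt0 invf_lt1 ?expR_gt0 // expR_gt1. Qed.

Lemma sqrtrM_le {R : rcfType} (a D t : R) :
  0 <= a -> 0 <= t -> D <= 4 * t ->
  Num.sqrt (a * D) <= 2 * Num.sqrt a * Num.sqrt t.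
Proof.
move=> a_ge0 t_ge0 D_le.
have rhs_ge0 : 0 <= 2 * Num.sqrt a * Num.sqrt t by rewrite !mulr_ge0 ?sqrtr_ge0.
rewrite -(ger0_norm rhs_ge0) -sqrtr_sqr ler_wsqrtr //.
rewrite !exprMn !sqr_sqrtr //; nra.
Qed.

Lemma quadratic_sqrt_bound {R : rcfType} (t a L : R) :
  0 <= t -> 0 <= a -> t - 2 * Num.sqrt a * Num.sqrt t < L ->
  t <= (Num.sqrt (L + a) + Num.sqrt a) ^+ 2.
Proof.
move=> t_ge0 a_ge0 lt_L.
have t2 : Num.sqrt t ^+ 2 = t by rewrite sqr_sqrtr.
have a2 : Num.sqrt a ^+ 2 = a by rewrite sqr_sqrtr.
have sqr_le : (Num.sqrt t - Num.sqrt a) ^+ 2 <= L + a.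
  by rewrite sqrrB t2 a2; lra.
have root_le : Num.sqrt t - Num.sqrt a <= Num.sqrt (L + a).
  by rewrite (le_trans (ler_norm _)) // -sqrtr_sqr ler_wsqrtr.
by rewrite -{1}t2 ler_sqr ?nnegrE ?addr_ge0 ?sqrtr_ge0 // -lerBlDr.
Qed.

Lemma ler_of_scaled_mean {R : realFieldType} (s Gamma n th e B : R) :
  0 < s -> 0 < n -> 0 < th -> 0 < 1 - e -> 1 - e <= Gamma ->
  th * (Gamma * s / n) <= B -> s <= B * (n / (th * (1 - e))).
Proof.
move=> s_gt0 n_gt0 th_gt0 e_lt1 Gamma_ge mean_le.
rewrite mulrA ler_pdivlMr ?mulr_gt0 //.
apply: le_trans (_ : th * (Gamma * s / n) * n <= _); last by rewrite ler_pM2r.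
by rewrite mulrA divfK ?gt_eqF // mulrC mulrA ler_pM2r // ler_pM2l.
Qed.

Theorem mainTheorem6
  (R : realType) (V : finType) (Om : finType) (P : Om -> R)
  (sigma : {set V} -> R) (INF_F INF_hat eps' : R) (k th1 : nat)
  (R1 : 'I_th1 -> Om -> rdr R V) (So : {set V}) (delta : R) :
  let n : R := #|V|%:R in
  let Gamma := INF_hat / INF_F in
  (* estimator of the i-th RDR set *)
  let Zhat := fun (i : 'I_th1) (S : {set V}) (w : Om) =>
      INF_hat / n * (if S :&: (R1 i w).1 != set0 then (R1 i w).2 else 0) in
  let Lambda1 := fun (S : {set V}) (w : Om) => INF_hat / n * covW (fun i => R1 i w) S in
  let Sstar := fun w : Om => greedy (fun S => covW (fun i => R1 i w) S) k in
  let a := ln (1 / delta) in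
  is_prob P ->
  mutually_independent P R1 ->
  (0 < th1)%N ->
  0 < INF_F ->
  0 < eps' < 1 ->
  1 - eps' <= Gamma <= 1 + eps' ->
  INF_hat <= n ->
  (forall i S, Expect P (Zhat i S) = Gamma * sigma S / n) ->
  (forall S (lam : R), 0 < lam ->
     Pr P (fun w => \sum_(i < th1) Zhat i S w - th1%:R * (Gamma * sigma S / n) <= - lam)
       <= expR (- (lam ^+ 2) / (4 * th1%:R * (Gamma * sigma S / n) * INF_hat / n))) ->
  (forall w, (1 - (expR 1)^-1) * Lambda1 So w <= Lambda1 (Sstar w) w) ->
  #|So| = k ->
  (forall S : {set V}, #|S| = k -> sigma S <= sigma So) ->
  0 < delta < 1 ->
  Pr P (fun w => sigma So <=
     (Num.sqrt (Lambda1 (Sstar w) w / (1 - (expR 1)^-1) + a) + Num.sqrt a) ^+ 2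
       * (n / (th1%:R * (1 - eps'))))
  >= 1 - delta.
Proof.
move=> n Gamma Zhat Lambda1 Sstar a Pprob _ th1_gt0 INF_gt0 /andP[_ eps_lt1]
  /andP[Gamma_ge _] INFh_le_n _ tail greedy_ratio _ _ /andP[delta_gt0 delta_lt1].
have th_gt0 : 0 < th1%:R :> R by rewrite ltr0n.
have Gamma_gt0 : 0 < Gamma by lra.
have INFh_gt0 : 0 < INF_hat by rewrite -(divfK (lt0r_neq0 INF_gt0) INF_hat) mulr_gt0.
have n_gt0 : 0 < n := lt_le_trans INFh_gt0 INFh_le_n.
have [sigma_le0 | sigma_gt0] := lerP (sigma So) 0.
  rewrite Pr_all // => [|w]; first by rewrite gerBl ltW.
  apply: le_trans sigma_le0 _; apply: mulr_ge0; first exact: sqr_ge0.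
  by apply/ltW/divr_gt0; rewrite // mulr_gt0 // subr_gt0.
set p := Gamma * sigma So / n.
set D := 4 * th1%:R * p * INF_hat / n.
have tp_gt0 : 0 < th1%:R * p by rewrite !mulr_gt0 ?invr_gt0.
have D_le : D <= 4 * (th1%:R * p).
  have INFh_div_le1 : INF_hat / n <= 1 by rewrite ler_pdivrMr ?mul1r.
  rewrite /D -mulrA [leRHS]mulrA ler_piMr //.
  by apply: ltW; rewrite -mulrA mulr_gt0.
have D_gt0 : 0 < D by rewrite !mulr_gt0 ?invr_gt0.
have a_ge0 : 0 <= a by rewrite ln_ge0 // div1r invf_ge1 // (ltW delta_lt1).
have /= := Pr_tail_sqrt_ln_le _ D _ D_gt0 delta_gt0 delta_lt1 (tail So).
set lam := Num.sqrt _; set tail_event := (fun w => _) => tail_So.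
apply: le_trans (Pr_ge_compl tail_event _ Pprob _); first by rewrite lerD2l lerN2.
move=> w; rewrite /tail_event -ltNge.
have -> : \sum_(i < th1) Zhat i So w = Lambda1 So w by rewrite /Lambda1 /covW mulr_sumr.
move=> Lambda1_gt.
apply: (@ler_of_scaled_mean _ _ Gamma); rewrite ?subr_gt0 //.
apply: quadratic_sqrt_bound => //; first exact: ltW.
have lam_le : lam <= 2 * Num.sqrt a * Num.sqrt (th1%:R * p).
  exact: sqrtrM_le a D _ a_ge0 (ltW tp_gt0) D_le.
have : Lambda1 So w <= Lambda1 (Sstar w) w / (1 - (expR 1)^-1).
  by rewrite ler_pdivlMr ?one_sub_invexpR1_gt0 // mulrC.
rewrite -/p in Lambda1_gt *; lra.
Qed.
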